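(* Let $\Sigma$ be a non-empty finite or countably infinite alphabet and let $\mu_p$ be the probability map induced by a Bernoulli distribution $p$ on $\Sigma$. If $\alpha\in\Sigma^\omega$ is $\mu_p$-distributed, then $\alpha$ is $\mu_p$-block-distributed.
   Context: $\mu_p(a_1\cdots a_n)=\prod_{i=1}^n p(a_i)$ where $p:\Sigma\to[0,1]$, $\sum_a p(a)=1$. $\alpha$ is $\mu_p$-distributed if for every $w\in\Sigma^+$, $\lim_{N\to\infty}\#_w(\alpha|_{\le N})/N=\mu_p(w)$, where $\#_w(v)$ counts occurrences of $w$ as a contiguous block of $v$ and $\alpha|_{\le N}$ is the length-$N$ prefix. For $\alpha=x_1x_2\cdots$ and $n\ge1$, the $n$-block decomposition is $(\alpha_{(n,r)})_{r\ge1}$ with $\alpha_{(n,r)}=x_{(r-1)n+1}\cdots x_{rn}$. $\alpha$ is $\mu_p$-block-distributed if for every $n\ge1$ and every $w\in\Sigma^n$, $\lim_{k\to\infty}|\{r\le k:\alpha_{(n,r)}=w\}|/k=\mu_p(w)$. *)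

From mathcomp Require Import all_boot all_order all_algebra.
From mathcomp Require Import all_classical all_reals all_analysis.
Set Implicit Arguments. Unset Strict Implicit. Unset Printing Implicit Defensive.
Import Order.TTheory GRing.Theory Num.Theory.
Import numFieldNormedType.Exports.
Local Open Scope classical_set_scope.
Local Open Scope ring_scope.

(* Infinite words alpha = x_1 x_2 ... are represented by alpha : nat -> Sigma,
   with alpha i = x_{i+1}. *)

Definition mu_p {R : realType} {Sigma : Type} (p : Sigma -> R) (w : seq Sigma) : R :=
  \prod_(a <- w) p a.

Definition factor {Sigma : Type} (alpha : nat -> Sigma) (i m : nat) : seq Sigma :=
  mkseq (fun j => alpha (i + j)) m.

(* #_w(alpha|_{<=N}) : number of occurrences of w as a contiguous block
   of the length-N prefix of alpha *)
Definition occ {Sigma : eqType} (alpha : nat -> Sigma) (w : seq Sigma) (N : nat) : nat :=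
  \sum_(i < N) ((i + size w <= N) && (factor alpha i (size w) == w)).

Definition mu_distributed {R : realType} {Sigma : eqType}
  (p : Sigma -> R) (alpha : nat -> Sigma) : Prop :=
  forall w : seq Sigma, (0 < size w)%N ->
    (fun N : nat => (occ alpha w N)%:R / N%:R) @ \oo --> mu_p p w.

(* the r-th block (r >= 1) of the n-block decomposition: x_{(r-1)n+1} ... x_{rn} *)
Definition block {Sigma : Type} (alpha : nat -> Sigma) (n r : nat) : seq Sigma :=
  factor alpha ((r - 1) * n) n.

Definition block_count {Sigma : eqType} (alpha : nat -> Sigma) (n : nat)
  (w : seq Sigma) (k : nat) : nat :=
  \sum_(1 <= r < k.+1) (block alpha n r == w).

Definition mu_block_distributed {R : realType} {Sigma : eqType}
  (p : Sigma -> R) (alpha : nat -> Sigma) : Prop :=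
  forall (n : nat), (1 <= n)%N -> forall w : seq Sigma, size w = n ->
    (fun k : nat => (block_count alpha n w k)%:R / k%:R) @ \oo --> mu_p p w.

From Pilot Require Import Defs.
From mathcomp Require Import all_boot all_order all_algebra.
From mathcomp Require Import all_classical all_reals all_analysis.
From mathcomp Require Import lra zify ring.
Import Order.TTheory GRing.Theory Num.Theory.
Import numFieldNormedType.Exports.
Local Open Scope classical_set_scope.
Local Open Scope ring_scope.
Set Implicit Arguments. Unset Strict Implicit. Unset Printing Implicit Defensive.

(* The analysis library also exports a [factor]; we mean the one of Defs. *)
Local Notation factor := Pilot.Defs.factor.

(* Fix w of length n, let hit i be the indicator of an occurrence of w at
   position i, and window K i = hit i + hit (i + n) + ... + hit (i + (K-1) n).
   The number C_m of blocks equal to w among the first m blocks is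
   hit 0 + hit n + ... + hit ((m-1) n).
   1. Densities of patterns.  Words with wildcards ("patterns") have upper
      density at most their probability: for words this is mu_p-distribution,
      and a wildcard is removed by splitting it over a finite set of letters
      of mass close to 1 (the alphabet may be countably infinite).  Applied to
      "w, wildcards, w" this bounds the pair correlations of hit by mu_p(w)^2.
   2. Second moment.  Expanding the square with these correlations, the
      average of (window K i - K mu_p(w))^2 over i < N is at most about K.
   3. Averaging.  Summing window K over the block starts gives K C_m up to K^2,
      and |x| <= d + x^2/d bounds its deviation from K m mu_p(w) by the second
      moment; taking K large compared to n / e^2 yields |C_m - m mu_p(w)| <= e m. *)

Section NatSums.
Implicit Type f : nat -> nat.

Lemma leq_sum_ord_widen f k r : (\sum_(i < k) f i <= \sum_(i < k + r) f i)%N.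
Proof. by rewrite big_split_ord leq_addr. Qed.

Lemma leq_sum_ord_shift f N c : (\sum_(i < N) f (i + c)%N <= \sum_(j < N + c) f j)%N.
Proof.
rewrite addnC big_split_ord /=; apply: leq_trans (leq_addl _ _).
by apply/eq_leq/eq_bigr => i _; rewrite addnC.
Qed.

Lemma leq_sum_ord_unshift f N c : (forall i, f i <= 1)%N ->
  (\sum_(i < N) f i <= \sum_(i < N) f (i + c)%N + c)%N.
Proof.
move=> f1; apply: (leq_trans (leq_sum_ord_widen f N c)).
rewrite addnC big_split_ord /= addnC leq_add //.
- by apply/eq_leq/eq_bigr => i _; rewrite addnC.
- by apply: (@leq_trans (\sum_(i < c) 1)); [exact: leq_sum | rewrite sum1_card card_ord].
Qed.

Lemma leq_sum_ord_shift_le1 f N c : (forall i, f i <= 1)%N ->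
  (\sum_(i < N) f (i + c)%N <= \sum_(i < N) f i + c)%N.
Proof.
move=> f1; apply: (leq_trans (leq_sum_ord_shift f N c)).
rewrite big_split_ord /= leq_add2l.
by apply: (@leq_trans (\sum_(i < c) 1)); [exact: leq_sum | rewrite sum1_card card_ord].
Qed.

End NatSums.

Lemma sumr_ord_const (R : pzSemiRingType) (K : nat) (x : R) : \sum_(r < K) x = K%:R * x.
Proof. by rewrite sumr_const card_ord mulr_natl. Qed.

Section Density.
Variable R : realType.

Lemma eventually_le_linear (a e : R) : 0 < e -> \forall N \near \oo, a <= e * N%:R.
Proof.
move=> e0; apply: filterS (nbhs_infty_ger (a / e)) => N.
by move=> h; rewrite mulrC -ler_pdivrMr.
Qed.

Definition upper_density_le (u : nat -> nat) (l : R) :=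
  forall e, 0 < e -> \forall N \near \oo, (u N)%:R <= (l + e) * N%:R.

Definition lower_density_ge (u : nat -> nat) (l : R) :=
  forall e, 0 < e -> \forall N \near \oo, (l - e) * N%:R <= (u N)%:R.

Lemma cvg_density (u : nat -> nat) (l : R) :
  (fun N => (u N)%:R / N%:R) @ \oo --> l ->
  upper_density_le u l /\ lower_density_ge u l.
Proof.
move=> /cvgrPdist_le ul; split=> e e0;
  apply: filterS2 (ul e e0) (nbhs_infty_gt 0) => N;
  rewrite ler_norml => /andP[lo hi]; rewrite -(ltr0n R) => N0.
- by rewrite -ler_pdivrMr //; lra.
- by rewrite -ler_pdivlMr //; lra.
Qed.

Lemma upper_density_mono (u v : nat -> nat) (l : R) :
  (forall N, v N <= u N)%N -> upper_density_le u l -> upper_density_le v l.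
Proof.
move=> vu ul e e0; apply: filterS (ul e e0) => N; apply: le_trans.
by rewrite ler_nat.
Qed.

Lemma lower_density_mono (u v : nat -> nat) (l : R) :
  (forall N, u N <= v N)%N -> lower_density_ge u l -> lower_density_ge v l.
Proof.
move=> uv ul e e0; apply: filterS (ul e e0) => N /le_trans; apply.
by rewrite ler_nat.
Qed.

Lemma upper_density_shift (u : nat -> nat) (l : R) (c : nat) :
  upper_density_le u l -> upper_density_le (fun N => u (N + c)%N) l.
Proof.
move=> ul e e0; have e2 : 0 < e / 2 by rewrite divr_gt0.
have ulc : \forall N \near \oo, (u (N + c)%N)%:R <= (l + e / 2) * (N + c)%N%:R.
  exact: (cvg_addnr c _ (ul _ e2)).
apply: filterS2 ulc (eventually_le_linear ((l + e / 2) * c%:R) e2) => N.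
by rewrite natrD mulrDr; lra.
Qed.

Lemma upper_density_sum (T : Type) (F : seq T) (u : T -> nat -> nat) (l : T -> R) :
  (forall a, upper_density_le (u a) (l a)) ->
  upper_density_le (fun N => \sum_(a <- F) u a N)%N (\sum_(a <- F) l a).
Proof.
move=> ul; elim: F => [|a F IH] e e0.
  by apply: nearW => N; rewrite !big_nil add0r mulr_ge0 // ltW.
have e2 : 0 < e / 2 by rewrite divr_gt0.
apply: filterS2 (ul a _ e2) (IH _ e2) => N ua uF.
by rewrite !big_cons natrD; lra.
Qed.

Lemma lower_density_sum (T : Type) (F : seq T) (u : T -> nat -> nat) (l : T -> R) :
  (forall a, lower_density_ge (u a) (l a)) ->
  lower_density_ge (fun N => \sum_(a <- F) u a N)%N (\sum_(a <- F) l a).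
Proof.
move=> ul; elim: F => [|a F IH] e e0.
  by apply: nearW => N; rewrite !big_nil sub0r mulNr oppr_le0 mulr_ge0 // ltW.
have e2 : 0 < e / 2 by rewrite divr_gt0.
apply: filterS2 (ul a _ e2) (IH _ e2) => N ua uF.
by rewrite !big_cons natrD; lra.
Qed.

End Density.

(* Patterns are words over Sigma with wildcards (None); pcount P M counts the
   positions i < M at which alpha matches P. *)
Section Patterns.
Variables (Sigma : eqType) (alpha : nat -> Sigma).

Fixpoint matches (P : seq (option Sigma)) (i : nat) : bool :=
  if P is o :: P' then
    (if o is Some a then alpha i == a else true) && matches P' i.+1
  else true.

Definition pcount (P : seq (option Sigma)) (M : nat) : nat :=
  \sum_(i < M) matches P i.

Lemma matches_cat P1 P2 i :
  matches (P1 ++ P2) i = matches P1 i && matches P2 (i + size P1).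
Proof.
by elim: P1 i => [|o P1 IH] i /=; rewrite ?addn0 // IH addSnnS andbA.
Qed.

Lemma factorS i m : factor alpha i m.+1 = alpha i :: factor alpha i.+1 m.
Proof.
rewrite /factor /mkseq /=; congr (_ :: _); first by rewrite addr0.
rewrite -[1%N]/(1 + 0)%N iotaDl -map_comp; apply: eq_map => j /=.
by congr alpha; lia.
Qed.

Lemma matches_word u i : matches (map Some u) i = (factor alpha i (size u) == u).
Proof. by elim: u i => [|a u IH] i //=; rewrite IH factorS eqseq_cons. Qed.

Lemma matches_wild k i : matches (nseq k None) i.
Proof. by elim: k i => [|k IH] i //=. Qed.

Lemma pcount_nil M : pcount [::] M = M.
Proof. by rewrite /pcount sum1_card card_ord. Qed.

Lemma occ_le_pcount u M : (occ alpha u M <= pcount (map Some u) M)%N.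
Proof.
apply: leq_sum => i _; rewrite matches_word.
by case: (_ == u); rewrite ?andbT ?andbF ?leq_b1.
Qed.

(* An occurrence starting before M lies in the prefix of length M + |u|. *)
Lemma pcount_le_occ u M : (pcount (map Some u) M <= occ alpha u (M + size u))%N.
Proof.
pose f i : nat := ((i + size u <= M + size u) && (factor alpha i (size u) == u))%N.
apply: leq_trans (leq_sum_ord_widen f M (size u)).
by apply/eq_leq/eq_bigr => i _; rewrite /f leq_add2r (ltnW (ltn_ord i)) matches_word.
Qed.

Lemma letter_partition (F : seq Sigma) (x : Sigma) : uniq F ->
  (\sum_(a <- F) (x == a) + (x \notin F) = 1)%N.
Proof.
move=> uF; have -> : (\sum_(a <- F) (x == a) = count_mem x F)%N.
  rewrite -sum1_count [RHS]big_mkcond /=.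
  by apply: eq_bigr => a _; rewrite eq_sym; case: eqP.
by rewrite (count_uniq_mem x uF); case: (x \in F).
Qed.

Lemma matches_wild_split (F : seq Sigma) P1 P2 i :
  (matches (P1 ++ None :: P2) i <=
   \sum_(a <- F) matches (P1 ++ Some a :: P2) i + (alpha (i + size P1) \notin F))%N.
Proof.
rewrite matches_cat /=; case: (boolP (alpha (i + size P1) \in F)) => [inF|_].
- rewrite (big_rem _ inF) /= matches_cat /= eqxx addn0.
  by case: (_ && _); rewrite ?leq_addr.
- by rewrite addn1; case: (_ && _).
Qed.

Lemma pcount_wild_split (F : seq Sigma) P1 P2 N : uniq F ->
  (pcount (P1 ++ None :: P2) N + \sum_(a <- F) pcount [:: Some a] N <=
   \sum_(a <- F) pcount (P1 ++ Some a :: P2) N + (N + size P1))%N.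
Proof.
move=> uF; set t := size P1; pose g j : nat := alpha j \notin F.
pose L a := (\sum_(j < N + t) (alpha j == a))%N.
have split_count : (pcount (P1 ++ None :: P2) N <=
    \sum_(a <- F) pcount (P1 ++ Some a :: P2) N + \sum_(i < N) g (i + t))%N.
  rewrite /pcount exchange_big -big_split /=.
  by apply: leq_sum => i _; exact: matches_wild_split.
have shift := leq_sum_ord_shift g N t.
have letters : (\sum_(a <- F) pcount [:: Some a] N <= \sum_(a <- F) L a)%N.
  apply: leq_sum => a _.
  apply: leq_trans (leq_sum_ord_widen (fun j => (alpha j == a) : nat) N t).
  by apply/eq_leq/eq_bigr => j _ /=; rewrite andbT.
have total : (\sum_(j < N + t) g j + \sum_(a <- F) L a = N + t)%N.
  rewrite exchange_big -big_split /= -[RHS]card_ord -sum1_card.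
  by apply: eq_bigr => j _; rewrite addnC letter_partition.
lia.
Qed.

Lemma wildcard_free_word (P : seq (option Sigma)) :
  count (pred1 None) P = 0%N -> P = map Some (pmap id P).
Proof. by elim: P => [|[a|] P IH] //= /IH <-. Qed.

End Patterns.

Section PatternProbability.
Variables (R : realType) (Sigma : eqType) (p : Sigma -> R).

Definition muP (P : seq (option Sigma)) : R :=
  \prod_(o <- P) (if o is Some a then p a else 1).

Lemma muP_cat P1 P2 : muP (P1 ++ P2) = muP P1 * muP P2.
Proof. by rewrite /muP big_cat. Qed.

Lemma muP_word u : muP (map Some u) = mu_p p u.
Proof. by rewrite /muP /mu_p big_map. Qed.

Lemma muP_wild k : muP (nseq k None) = 1.
Proof. by elim: k => [|k IH]; rewrite /muP ?big_nil //= big_cons mul1r. Qed.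

Lemma muP_ge0 P : (forall a, 0 <= p a) -> 0 <= muP P.
Proof. by move=> p0; apply: prodr_ge0 => -[a|]. Qed.

Lemma mu_p_in01 u : (forall a, 0 <= p a <= 1) -> 0 <= mu_p p u <= 1.
Proof.
move=> p01; rewrite prodr_ile1 ?andbT => [|a _]; last exact: p01.
by apply: prodr_ge0 => a _; case/andP: (p01 a).
Qed.

End PatternProbability.

Section FiniteMass.
Variables (R : realType) (Sigma : countType) (p : Sigma -> R).
Hypothesis p_sum1 : (\esum_(a in [set: Sigma]) (p a)%:E = 1)%E.

Lemma finite_mass_le1 (F : seq Sigma) : uniq F -> \sum_(a <- F) p a <= 1.
Proof.
move=> uF; rewrite -lee_fin -p_sum1; apply: esum_ge.
exists [set` F]; first by split; [exact: finite_seq|].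
by rewrite -fsbig_seq // sumEFin.
Qed.

Lemma finite_mass_ge (e : R) : 0 < e ->
  exists2 F : seq Sigma, uniq F & 1 - e <= \sum_(a <- F) p a.
Proof.
move=> e0; have : ((1 - e)%:E < \esum_(a in [set: Sigma]) (p a)%:E)%E.
  by rewrite p_sum1 lte_fin gtrBl.
case/ereal_sup_gt => _ [A [/finite_seqP[s ->] _] <-] mass_s.
have undupE : [set` s] = [set` undup s].
  by apply/seteqP; split => x /=; rewrite mem_undup.
exists (undup s); first exact: undup_uniq.
by move: mass_s; rewrite undupE -fsbig_seq ?undup_uniq // sumEFin lte_fin => /ltW.
Qed.

End FiniteMass.

Section PatternDensity.
Variables (R : realType) (Sigma : countType) (p : Sigma -> R) (alpha : nat -> Sigma).
Hypothesis p01 : forall a, 0 <= p a <= 1.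
Hypothesis p_sum1 : (\esum_(a in [set: Sigma]) (p a)%:E = 1)%E.
Hypothesis alpha_distr : mu_distributed p alpha.

Let p0 a : 0 <= p a. Proof. by case/andP: (p01 a). Qed.

Lemma word_lower_density u : (0 < size u)%N ->
  lower_density_ge (pcount alpha (map Some u)) (mu_p p u).
Proof.
move=> u0; apply: lower_density_mono (occ_le_pcount alpha u) _.
exact: (cvg_density (alpha_distr u0)).2.
Qed.

Lemma word_upper_density u : upper_density_le (pcount alpha (map Some u)) (mu_p p u).
Proof.
case: u => [|a u] e e0.
  by apply: nearW => N; rewrite pcount_nil /mu_p big_nil ler_peMl // lerDl ltW.
apply: upper_density_mono (pcount_le_occ alpha (a :: u)) _ e e0.
exact: upper_density_shift (cvg_density (alpha_distr (isT : (0 < size (a :: u))%N))).1.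
Qed.

(* A finite set F of
   letters carries almost all the mass, and by pcount_wild_split the positions
   whose letter is outside F have density at most about 1 - p(F). *)
Lemma wildcard_upper_density P1 P2 :
  (forall a, upper_density_le (pcount alpha (P1 ++ Some a :: P2))
                             (muP p (P1 ++ Some a :: P2))) ->
  upper_density_le (pcount alpha (P1 ++ None :: P2)) (muP p (P1 ++ None :: P2)).
Proof.
move=> inst e e0; set mu := muP p (P1 ++ None :: P2).
have mu0 : 0 <= mu := muP_ge0 _ p0.
have muE a : muP p (P1 ++ Some a :: P2) = p a * mu.
  by rewrite /mu !muP_cat /muP !big_cons mul1r; ring.
have e4 : 0 < e / 4 by rewrite divr_gt0.
have [F uF massF] := finite_mass_ge p_sum1 e4.
have massF1 := finite_mass_le1 p_sum1 uF.
set S := \sum_(a <- F) p a in massF massF1.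
have instances : upper_density_le
    (fun N => \sum_(a <- F) pcount alpha (P1 ++ Some a :: P2) N)%N (S * mu).
  by rewrite /S mulr_suml; apply: upper_density_sum => a; rewrite -muE.
have letters : lower_density_ge (fun N => \sum_(a <- F) pcount alpha [:: Some a] N)%N S.
  apply: lower_density_sum => a.
  by have := word_lower_density (isT : (0 < size [:: a])%N); rewrite /mu_p big_seq1.
apply: filterS3 (instances _ e4) (letters _ e4)
  (eventually_le_linear (size P1)%:R e4) => N U L prefix.
have := pcount_wild_split alpha P1 P2 N uF.
rewrite -(ler_nat R) !natrD => split.
have tail_pos : 0 <= (1 - S) * (mu * N%:R) by rewrite mulr_ge0 ?subr_ge0 ?mulr_ge0.
have tail_small : (1 - S) * N%:R <= e / 4 * N%:R by rewrite ler_wpM2r //; lra.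
lra.
Qed.

Lemma pattern_upper_density P : upper_density_le (pcount alpha P) (muP p P).
Proof.
move Ek : (count (pred1 None) P) => k; elim: k P Ek => [|k IH] P Ek.
  by rewrite (wildcard_free_word Ek) muP_word; exact: word_upper_density.
have wild : None \in P by rewrite -has_pred1 has_count Ek.
move: Ek; case/splitPr: wild => P1 P2 Ek; apply: wildcard_upper_density => a; apply: IH.
by move: Ek; rewrite !count_cat /= add0n addnS => -[].
Qed.

End PatternDensity.

Section Windows.
Variables (R : realType) (Sigma : eqType) (alpha : nat -> Sigma) (w : seq Sigma).
Local Notation n := (size w).

Definition hit (i : nat) : nat := factor alpha i n == w.

Lemma hit_le1 i : (hit i <= 1)%N.
Proof. exact: leq_b1. Qed.

Lemma block_countE m : block_count alpha n w m = (\sum_(q < m) hit (q * n))%N.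
Proof.
by rewrite /block_count big_add1 big_mkord; apply: eq_bigr => q _; rewrite /block subn1.
Qed.

Lemma pcount_wordE M : pcount alpha (map Some w) M = (\sum_(i < M) hit i)%N.
Proof. by apply: eq_bigr => i _; rewrite matches_word. Qed.

Definition gap_pattern (d : nat) : seq (option Sigma) :=
  map Some w ++ nseq (d - n) None ++ map Some w.

Lemma hit_pair i d : (n <= d)%N ->
  (hit i * hit (i + d) = matches alpha (gap_pattern d) i)%N.
Proof.
move=> nd; rewrite /gap_pattern !matches_cat matches_wild !matches_word.
rewrite size_map size_nseq -addnA subnKC // /hit.
by case: (_ == w); case: (_ == w).
Qed.

Definition window (K i : nat) : R := \sum_(r < K) (hit (i + r * n))%:R.

(* Summing the windows at the block starts counts every block K times, up to
   boundary effects of size at most K per shift. *)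
Lemma block_window_sum K m :
  `|\sum_(q < m) window K (q * n) - K%:R * (block_count alpha n w m)%:R| <= K%:R * K%:R.
Proof.
pose f q := hit (q * n).
have shiftE : \sum_(q < m) window K (q * n) = \sum_(r < K) (\sum_(q < m) f (q + r)%N)%:R.
  rewrite exchange_big; apply: eq_bigr => r _; rewrite natr_sum.
  by apply: eq_bigr => q _; rewrite /f mulnDl.
rewrite shiftE block_countE -!sumr_ord_const -sumrB.
apply: le_trans (ler_norm_sum _ _ _) _; apply: ler_sum => r _.
have lo := @leq_sum_ord_unshift f m r (fun i => hit_le1 _).
have hi := @leq_sum_ord_shift_le1 f m r (fun i => hit_le1 _).
have rK : (r%:R : R) <= K%:R by rewrite ler_nat ltnW.
rewrite -!(ler_nat R) !natrD in lo hi.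
by rewrite ler_norml; apply/andP; split; lra.
Qed.

End Windows.

Section SecondMoment.
Variables (R : realType) (Sigma : countType) (p : Sigma -> R) (alpha : nat -> Sigma).
Variable w : seq Sigma.
Hypothesis p01 : forall a, 0 <= p a <= 1.
Hypothesis p_sum1 : (\esum_(a in [set: Sigma]) (p a)%:E = 1)%E.
Hypothesis alpha_distr : mu_distributed p alpha.
Hypothesis w_nonempty : (0 < size w)%N.

Local Notation n := (size w).
Local Notation mu := (mu_p p w).
Local Notation hit := (hit alpha w).
Local Notation window := (window R alpha w).

Lemma muP_gap_pattern d : muP p (gap_pattern w d) = mu ^+ 2.
Proof. by rewrite !muP_cat muP_wild !muP_word mul1r expr2. Qed.

Lemma pair_upper_density r s : (r < s)%N ->
  upper_density_le (fun N => \sum_(i < N) hit (i + r * n) * hit (i + s * n))%N (mu ^+ 2).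
Proof.
move=> rs; rewrite -(muP_gap_pattern ((s - r) * n)).
apply: upper_density_mono (upper_density_shift (r * n)
  (pattern_upper_density p01 p_sum1 alpha_distr _)) => N.
pose gap := matches alpha (gap_pattern w ((s - r) * n)).
apply: leq_trans (leq_sum_ord_shift gap N (r * n)).
apply/eq_leq/eq_bigr => i _; rewrite -hit_pair ?leq_pmull ?subn_gt0 //.
by rewrite -addnA -mulnDl subnKC // ltnW.
Qed.

Lemma correlation_upper K e : 0 < e -> \forall N \near \oo, forall rs : 'I_K * 'I_K,
  ((\sum_(i < N) hit (i + rs.1 * n) * hit (i + rs.2 * n))%N)%:R
    <= (mu ^+ 2 + e + (rs.1 == rs.2)%:R) * N%:R.
Proof.
move=> e0; apply: filter_forall => -[r s] /=.
have mu2 : 0 <= mu ^+ 2 := sqr_ge0 _.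
case: (ltngtP r s) => [rs|sr|/val_inj rs].
- apply: filterS (pair_upper_density rs e0) => N.
  by rewrite -val_eqE (ltn_eqF rs) addr0.
- apply: filterS (pair_upper_density sr e0) => N.
  rewrite -val_eqE (gtn_eqF sr) addr0; apply: le_trans.
  by rewrite ler_nat; apply/eq_leq/eq_bigr => i _; rewrite mulnC.
- apply: nearW => N; rewrite rs eqxx.
  apply: (@le_trans _ _ N%:R); last by rewrite ler_peMl // lerDr addr_ge0 // ltW.
  rewrite ler_nat; apply: (@leq_trans (\sum_(i < N) 1)); last by rewrite sum1_card card_ord.
  by apply: leq_sum => i _; rewrite -[1%N]/(1 * 1)%N leq_mul ?hit_le1.
Qed.

Lemma window_sq_upper K e : 0 < e -> \forall N \near \oo,
  \sum_(i < N) window K i ^+ 2 <= (K%:R ^+ 2 * (mu ^+ 2 + e) + K%:R) * N%:R.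
Proof.
move=> e0; apply: filterS (correlation_upper K e0) => N corr.
have sqE : \sum_(i < N) window K i ^+ 2 =
    \sum_(r < K) \sum_(s < K) ((\sum_(i < N) hit (i + r * n) * hit (i + s * n))%N)%:R.
  rewrite (eq_bigr (fun i : 'I_N => \sum_(r < K) \sum_(s < K)
                     ((hit (i + r * n) * hit (i + s * n))%N)%:R)); last first.
    move=> i _; rewrite expr2 /window mulr_suml; apply: eq_bigr => r _.
    by rewrite mulr_sumr; apply: eq_bigr => s _; rewrite natrM.
  rewrite exchange_big; apply: eq_bigr => r _; rewrite exchange_big.
  by apply: eq_bigr => s _; rewrite natr_sum.
have diag (r : 'I_K) : \sum_(s < K) (r == s)%:R = 1 :> R.
  rewrite (bigD1 r) //= eqxx big1 ?addr0 // => s /negbTE.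
  by rewrite eq_sym => ->.
rewrite sqE; apply: le_trans (ler_sum _ (fun r _ => ler_sum _ (fun s _ => corr (r, s)))) _.
have rowE (r : 'I_K) : \sum_(s < K) ((mu ^+ 2 + e + (r == s)%:R) * N%:R)
    = (K%:R * (mu ^+ 2 + e) + 1) * N%:R.
  by rewrite -mulr_suml big_split /= diag sumr_const card_ord mulr_natl.
rewrite (eq_bigr _ (fun r _ => rowE r)) sumr_ord_const.
by rewrite (_ : K%:R * _ = (K%:R ^+ 2 * (mu ^+ 2 + e) + K%:R) * N%:R) //; ring.
Qed.

Lemma window_sum_lower K e : 0 < e -> \forall N \near \oo,
  K%:R * ((mu - e) * N%:R - K%:R * n%:R) <= \sum_(i < N) window K i.
Proof.
move=> e0; have := word_lower_density alpha_distr w_nonempty e0.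
apply: filterS => N; rewrite pcount_wordE => hits.
rewrite /window exchange_big /= -sumr_ord_const.
apply: ler_sum => r _; rewrite -natr_sum.
have := @leq_sum_ord_unshift (fun i => hit i) N (r * n) (fun i => hit_le1 _ _ _).
rewrite -(ler_nat R) natrD => unshift.
have rK : ((r * n)%N%:R : R) <= K%:R * n%:R.
  by rewrite -natrM ler_nat leq_mul2r (ltnW (ltn_ord r)) orbT.
lra.
Qed.

Lemma window_variance K e : 0 < e -> \forall N \near \oo,
  \sum_(i < N) (window K i - K%:R * mu) ^+ 2 <= (K%:R + e) * N%:R.
Proof.
move=> e0; set k := K%:R : R.
have k0 : 0 <= k by [].
have /andP[mu0 mu1] := mu_p_in01 w p01.
pose e1 := e / (6 * (k ^+ 2 + 1)).
have e10 : 0 < e1 by rewrite divr_gt0 // mulr_gt0 // ltr_wpDl ?sqr_ge0.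
have e1k : 3 * (k ^+ 2 * e1) <= e / 2.
  have frac1 : k ^+ 2 / (k ^+ 2 + 1) <= 1.
    by rewrite ler_pdivrMr ?mul1r ?lerDl // ltr_wpDl ?sqr_ge0.
  have -> : k ^+ 2 * e1 = e / 6 * (k ^+ 2 / (k ^+ 2 + 1)).
    by rewrite /e1; field; rewrite gt_eqF // ltr_wpDl ?sqr_ge0.
  nra.
near=> N.
have N0 : 0 <= N%:R :> R by [].
set A := window K.
have sq : \sum_(i < N) A i ^+ 2 <= (k ^+ 2 * (mu ^+ 2 + e1) + k) * N%:R.
  by near: N; exact: window_sq_upper.
have lin : k * ((mu - e1) * N%:R - k * n%:R) <= \sum_(i < N) A i.
  by near: N; exact: window_sum_lower.
have tail : 2 * (k ^+ 3 * n%:R) <= e / 2 * N%:R.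
  by near: N; apply: eventually_le_linear; rewrite divr_gt0.
have expand : \sum_(i < N) (A i - k * mu) ^+ 2 =
    \sum_(i < N) A i ^+ 2 - 2 * (k * mu) * \sum_(i < N) A i + N%:R * (k * mu) ^+ 2.
  rewrite (eq_bigr (fun i : 'I_N => A i ^+ 2 - 2 * (k * mu) * A i + (k * mu) ^+ 2)).
    by rewrite big_split sumrB -mulr_sumr sumr_ord_const.
  by move=> i _; ring.
have lin' := ler_wpM2l (mulr_ge0 (mulr_ge0 (ler0n R 2) k0) mu0) lin.
have P1 : mu * (k ^+ 2 * e1 * N%:R) <= k ^+ 2 * e1 * N%:R.
  by rewrite ler_piMl // mulr_ge0 // mulr_ge0 ?sqr_ge0 ?ltW.
have P2 : mu * (k ^+ 3 * n%:R) <= k ^+ 3 * n%:R by rewrite ler_piMl // mulr_ge0 ?exprn_ge0.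
have P3 := ler_wpM2r N0 e1k.
rewrite expand; nra.
Unshelve. all: by end_near.
Qed.

End SecondMoment.

Section BlockDeviation.
Variable R : realType.

Lemma norm_le_add_sqr_div (x d : R) : 0 < d -> `|x| <= d + x ^+ 2 / d.
Proof.
move=> d0; rewrite -(ler_pM2l d0) mulrDr mulrCA divff ?gt_eqF // mulr1 -expr2.
rewrite -[x ^+ 2]real_normK ?num_real //; nra.
Qed.

Lemma sum_subsample (g : nat -> R) k n : (0 < n)%N -> (forall i, 0 <= g i) ->
  \sum_(q < k) g (q * n)%N <= \sum_(i < k * n) g i.
Proof.
move=> n0 g0; elim: k => [|k IH]; first by rewrite !big_ord0.
rewrite big_ord_recr /= mulSnr big_split_ord /= lerD //.
case: n n0 {IH} => [//|n] _; rewrite big_ord_recl /= addn0 lerDl.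
by apply: sumr_ge0 => i _; exact: g0.
Qed.

Variables (Sigma : eqType) (alpha : nat -> Sigma) (w : seq Sigma).
Hypothesis w_nonempty : (0 < size w)%N.
Local Notation n := (size w).

Lemma block_deviation (mu d : R) K m : 0 < d ->
  K%:R * `|(block_count alpha n w m)%:R - m%:R * mu|
    <= K%:R ^+ 2 + m%:R * d
       + (\sum_(i < m * n) (window R alpha w K i - K%:R * mu) ^+ 2) / d.
Proof.
move=> d0; set k := K%:R : R; set C := (block_count alpha n w m)%:R.
pose x q := window R alpha w K (q * n) - k * mu.
have windows := block_window_sum R alpha w K m.
have sumE : \sum_(q < m) window R alpha w K (q * n) = \sum_(q < m) x q + m%:R * (k * mu).
  by rewrite sumrB sumr_ord_const subrK.
have amgm : `|\sum_(q < m) x q| <= m%:R * d + (\sum_(q < m) x q ^+ 2) / d.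
  apply: le_trans (_ : \sum_(q < m) (d + x q ^+ 2 / d) <= _).
    apply: le_trans (ler_norm_sum _ _ _) _.
    by apply: ler_sum => q _; exact: norm_le_add_sqr_div.
  by rewrite big_split /= sumr_ord_const -mulr_suml.
have sub : \sum_(q < m) x q ^+ 2
    <= \sum_(i < m * n) (window R alpha w K i - k * mu) ^+ 2.
  by apply: (@sum_subsample (fun i => (window R alpha w K i - k * mu) ^+ 2)) => // i;
    exact: sqr_ge0.
have sub' : (\sum_(q < m) x q ^+ 2) / d
    <= (\sum_(i < m * n) (window R alpha w K i - k * mu) ^+ 2) / d.
  by rewrite ler_pM2r ?invr_gt0.
have k0 : 0 <= k by [].
rewrite -{1}(ger0_norm k0) -normrM mulrBr.
rewrite sumE -/k -/C in windows; rewrite expr2.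
have -> : k * C - k * (m%:R * mu)
    = - (\sum_(q < m) x q + m%:R * (k * mu) - k * C) + \sum_(q < m) x q by ring.
apply: le_trans (ler_normD _ _) _; rewrite normrN; lra.
Qed.

End BlockDeviation.

Section BlockFrequency.
Variables (R : realType) (Sigma : countType) (p : Sigma -> R) (alpha : nat -> Sigma).
Variable w : seq Sigma.
Hypothesis p01 : forall a, 0 <= p a <= 1.
Hypothesis p_sum1 : (\esum_(a in [set: Sigma]) (p a)%:E = 1)%E.
Hypothesis alpha_distr : mu_distributed p alpha.
Hypothesis w_nonempty : (0 < size w)%N.

Local Notation n := (size w).
Local Notation mu := (mu_p p w).

(* For windows of K >= 32 n / e^2 blocks, the variance bound forces the block
   count of w among the first m blocks to be within e m of m mu. *)
Lemma block_frequency_close e : 0 < e -> \forall m \near \oo,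
  `|(block_count alpha n w m)%:R - m%:R * mu| <= e * m%:R.
Proof.
move=> e0; have n0 : 0 < n%:R :> R by rewrite ltr0n.
pose K := Num.bound (32 * n%:R / e ^+ 2); set k := K%:R : R.
have kbig : 32 * n%:R <= e ^+ 2 * k.
  have := archi_boundP (ltW (divr_gt0 (mulr_gt0 (ltr0n R 32) n0) (exprn_gt0 2 e0))).
  by rewrite -/K -/k ltr_pdivrMr ?exprn_gt0 // => /ltW; rewrite [k * _]mulrC.
have k0 : 0 < k by have := exprn_gt0 2 e0; nra.
pose d := e * k / 4; have d0 : 0 < d by rewrite divr_gt0 ?mulr_gt0.
have var : \forall m \near \oo,
    \sum_(i < m * n) (window R alpha w K i - k * mu) ^+ 2 <= (k + k) * (m * n)%N%:R.
  exact: cvg_mulnr w_nonempty _ (window_variance p01 p_sum1 alpha_distr w_nonempty K k0).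
apply: filterS2 var (eventually_le_linear (2 * k) e0) => m var big_m.
have dev := block_deviation alpha w_nonempty mu K m d0.
set D := `|_ - _| in dev *; set V := \sum_(i < _) _ in dev var.
have mR : 0 <= m%:R :> R by [].
have Vd : V / d <= m%:R * (e * k / 4).
  rewrite ler_pdivrMr //; apply: le_trans var _; rewrite natrM /d.
  have := ler_wpM2l (mulr_ge0 mR (ltW k0)) kbig.
  suff -> : (k + k) * (m%:R * n%:R) = m%:R * k * (32 * n%:R) / 16 by nra.
  by field.
have kk : k ^+ 2 <= k / 2 * (e * m%:R).
  by rewrite expr2; nra.
rewrite -(ler_pM2l k0); rewrite /d in dev Vd; nra.
Qed.

End BlockFrequency.

Theorem proposition5p1 (R : realType) (Sigma : countType)
  (p : Sigma -> R) (alpha : nat -> Sigma) :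
  inhabited Sigma ->
  (forall a, 0 <= p a <= 1) ->
  (\esum_(a in [set: Sigma]) (p a)%:E = 1)%E ->
  mu_distributed p alpha ->
  mu_block_distributed p alpha.
Proof.
move=> _ p01 p_sum1 alpha_distr n n_pos w size_w; subst n.
apply/cvgrPdist_le => e e0.
have close := block_frequency_close p01 p_sum1 alpha_distr n_pos e0.
apply: filterS2 close (nbhs_infty_gt 0) => m close m_pos.
have mR : 0 < m%:R :> R by rewrite ltr0n.
have -> : mu_p p w - (block_count alpha (size w) w m)%:R / m%:R
    = - ((block_count alpha (size w) w m)%:R - m%:R * mu_p p w) / m%:R.
  by field; rewrite gt_eqF.
by rewrite normrM normrN normfV (gtr0_norm mR) ler_pdivrMr.
Qed.
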